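(* Let $N\ge 1$ be an integer and $a>0$ real. Let $H=H^{(N)}(a)$ be the real $N\times N$ tridiagonal matrix with entries $H_{nn}=a+2n-1$ ($n=1,\dots,N$), $H_{n,n+1}=-n$ and $H_{n+1,n}=-(a+n)$ ($n=1,\dots,N-1$), all other entries zero. Let $\Theta_0=\Theta_0^{(N)}(a)$ be the diagonal $N\times N$ matrix with $\theta_{11}=1$ and $$\theta_{nn}=\frac{(n-1)!}{(a+n-1)(a+n-2)\cdots(a+2)(a+1)},\qquad n=2,3,\dots,N.$$ Then $\Theta_0$ is positive definite and satisfies $H^\dagger\Theta_0=\Theta_0 H$, i.e. $\Theta_0$ is a (diagonal) metric making $H$ Hermitian in the inner product $\langle x,y\rangle_{\Theta_0}=x^\dagger\Theta_0 y$.
   Context: $H^\dagger$ denotes the conjugate transpose (here the transpose, $H$ being real). A metric for $H$ is a positive definite Hermitian matrix $\Theta$ with $H^\dagger\Theta=\Theta H$ (Dieudonné relation). *)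

From mathcomp Require Import all_boot all_order all_algebra.
Set Implicit Arguments. Unset Strict Implicit. Unset Printing Implicit Defensive.
Import Order.TTheory GRing.Theory Num.Theory.
Local Open Scope ring_scope.

(* Indices are 0-based: row/column i : 'I_N corresponds to n = i+1 in the paper. *)

Definition Hmat (R : ringType) (N : nat) (a : R) : 'M[R]_N :=
  \matrix_(i < N, j < N)
    if (j == i :> nat) then a + (2 * i.+1 - 1)%N%:R
    else if (j == i.+1 :> nat) then - (i.+1)%:R
    else if (i == j.+1 :> nat) then - (a + (j.+1)%:R)
    else 0.

(* theta_{nn} = (n-1)! / ((a+n-1)(a+n-2)...(a+1)), theta_{11} = 1 (empty product). *)
Definition theta (R : fieldType) (a : R) (n : nat) : R :=
  ((n.-1)`!)%:R / \prod_(1 <= k < n) (a + k%:R).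

Definition Theta0 (R : fieldType) (N : nat) (a : R) : 'M[R]_N :=
  \matrix_(i < N, j < N) if i == j then theta a i.+1 else 0.

Definition posdef (R : numFieldType) (N : nat) (M : 'M[R]_N) : Prop :=
  M^T = M /\ forall x : 'cV[R]_N, x != 0 -> 0 < (x^T *m M *m x) 0 0.

From mathcomp Require Import all_boot all_order all_algebra.
Import Order.TTheory GRing.Theory Num.Theory.
Local Open Scope ring_scope.

(* Theta0 is diagonal, so H^T Theta0 = Theta0 H reduces entrywise to
   theta_j H_{ji} = theta_i H_{ij}; only the off-diagonal pairs (n, n+1)
   matter, and there this is the recurrence (a+n) theta_{n+1} = n theta_n
   defining the theta's. Positive definiteness follows from theta_n > 0. *)

Lemma Theta0_diag (R : fieldType) (N : nat) (a : R) :
  Theta0 N a = diag_mx (\row_(i < N) theta a i.+1).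
Proof. by apply/matrixP => i j; rewrite !mxE; case: eqP => [->|]. Qed.

Lemma quad_form_diag_mx (R : comPzSemiRingType) (N : nat) (d : 'rV[R]_N)
    (x : 'cV[R]_N) :
  (x^T *m diag_mx d *m x) 0 0 = \sum_(i < N) d 0 i * x i 0 ^+ 2.
Proof.
rewrite mul_mx_diag !mxE; apply: eq_bigr => i _.
by rewrite !mxE mulrAC mulrC -expr2.
Qed.

Lemma posdef_diag_mx (R : realFieldType) (N : nat) (d : 'rV[R]_N) :
  (forall i, 0 < d 0 i) -> posdef (diag_mx d).
Proof.
move=> d_gt0; split; first exact: tr_diag_mx.
move=> x x_neq0; rewrite quad_form_diag_mx.
have [k xk_neq0] : exists k, x k 0 != 0.
  apply/existsP; apply: contraNT x_neq0; rewrite negb_exists => /forallP x0.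
  by apply/eqP/matrixP => i j; rewrite (ord1 j) mxE; apply/eqP/negPn/x0.
rewrite (bigD1 k) //= ltr_pwDl //.
  by rewrite mulr_gt0 // exprn_even_gt0 // xk_neq0 orbT.
by apply: sumr_ge0 => i _; rewrite mulr_ge0 ?sqr_ge0 ?ltW.
Qed.

Lemma trmx_mul_diag_mx_sym (R : pzSemiRingType) (N : nat) (A : 'M[R]_N)
    (d : 'rV[R]_N) :
  (forall i j, A j i * d 0 j = d 0 i * A i j) ->
  A^T *m diag_mx d = diag_mx d *m A.
Proof.
move=> A_sym; apply/matrixP => i j; rewrite mul_mx_diag mul_diag_mx !mxE.
exact: A_sym.
Qed.

Lemma theta_gt0 (R : numFieldType) (a : R) (n : nat) : 0 < a -> 0 < theta a n.
Proof.
move=> a_gt0; rewrite divr_gt0 ?ltr0n ?fact_gt0 //.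
by apply: prodr_gt0 => k _; rewrite ltr_wpDr.
Qed.

Lemma theta_recr (R : fieldType) (a : R) (n : nat) :
  a + n.+1%:R != 0 -> (a + n.+1%:R) * theta a n.+2 = n.+1%:R * theta a n.+1.
Proof.
move=> an_neq0; rewrite /theta big_nat_recr //= factS natrM invfM.
by rewrite mulrC -!mulrA mulVf // mulr1.
Qed.

Lemma Hmat_theta_sym (R : numFieldType) (N : nat) (a : R) (i j : 'I_N) :
  0 < a -> Hmat N a j i * theta a j.+1 = theta a i.+1 * Hmat N a i j.
Proof.
move=> a_gt0; have an_neq0 n : a + n.+1%:R != 0 by rewrite gt_eqF ?ltr_wpDr.
rewrite !mxE; have [/val_inj-> | _] := eqVneq (i : nat) j; first exact: mulrC.
have [ei | _] := eqVneq (i : nat) j.+1.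
  by rewrite ei ltn_eqF // mulNr mulrN -theta_recr // mulrC.
have [ej | _] := eqVneq (j : nat) i.+1; last by rewrite mulr0 mul0r.
by rewrite ej mulNr mulrN theta_recr // mulrC.
Qed.

Theorem lemma1 (R : realFieldType) (N : nat) (a : R) :
  (1 <= N)%N -> 0 < a ->
  posdef (Theta0 N a) /\ (Hmat N a)^T *m Theta0 N a = Theta0 N a *m Hmat N a.
Proof.
move=> _ a_gt0; rewrite Theta0_diag; split.
  by apply: posdef_diag_mx => i; rewrite mxE theta_gt0.
apply: trmx_mul_diag_mx_sym => i j; rewrite [_ 0 i]mxE [_ 0 j]mxE.
exact: Hmat_theta_sym.
Qed.
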